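(* Let $S$ be a completely nonunitary partial isometry on a Hilbert space $\mathcal H$ with $\dim\mathcal K=\dim\tilde{\mathcal K}$ (possibly infinite), where $\mathcal K=(S\mathcal H)^\perp$ and $\tilde{\mathcal K}=\ker S$. For a unitary $A:\tilde{\mathcal K}\to\mathcal K$ define $U_A h=Sh$ for $h\perp\tilde{\mathcal K}$ and $U_Ah=Ah$ for $h\in\tilde{\mathcal K}$. Then $U_A$ is unitary and $\overline{\operatorname{span}}\{U_A^n k: k\in\mathcal K,\ n\in\mathbb Z\}=\mathcal H$. In particular, if $\dim\mathcal K=\dim\tilde{\mathcal K}=1$, then for any unit vector $k\in\mathcal K$ and any $\alpha\in\mathbb T$, with $U_\alpha$ defined by $A\tilde k=\alpha k$ for a unit vector $\tilde k\in\tilde{\mathcal K}$, one has $\overline{\operatorname{span}}\{U_\alpha^n k: n\in\mathbb Z\}=\mathcal H$.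
   Context: A contraction is completely nonunitary (c.n.u.) if there is no nonzero reducing subspace on which it is unitary. For a partial isometry $S$, $S\mathcal H$ is its final space and $(\ker S)^\perp$ its initial space. *)

From HB Require Import structures.
From mathcomp Require Import all_boot all_order all_algebra.
From mathcomp Require Import reals.
From mathcomp Require Export complex.
Set Implicit Arguments. Unset Strict Implicit. Unset Printing Implicit Defensive.
Import Order.TTheory GRing.Theory Num.Theory.
Local Open Scope ring_scope.

Section Hilbert.
Variables (R : realType) (H : lmodType R[i]) (ip : H -> H -> R[i]).

Definition is_inner_product :=
  [/\ (forall (a : R[i]) x y z, ip (a *: x + y) z = a * ip x z + ip y z),
      (forall x y, ip y x = (ip x y)^*),
      (forall x, 0 <= ip x x) &
      (forall x, ip x x = 0 -> x = 0)].

Definition nrm (x : H) : R := Num.sqrt (complex.Re (ip x x)).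

Definition complete_ip :=
  forall u : nat -> H,
    (forall e : R, 0 < e -> exists N, forall m n, (N <= m)%N -> (N <= n)%N ->
        nrm (u m - u n) < e) ->
    exists l, forall e : R, 0 < e -> exists N, forall n, (N <= n)%N -> nrm (u n - l) < e.

Definition hilbert := is_inner_product /\ complete_ip.

Definition closure (M : H -> Prop) : H -> Prop :=
  fun x => forall e : R, 0 < e -> exists y, M y /\ nrm (x - y) < e.

Definition closed_subspace (M : H -> Prop) :=
  [/\ M 0, (forall x y, M x -> M y -> M (x + y)),
      (forall (a : R[i]) x, M x -> M (a *: x)) &
      (forall x, closure M x -> M x)].

Definition perp (M : H -> Prop) : H -> Prop := fun x => forall y, M y -> ip x y = 0.

Definition span (X : H -> Prop) : H -> Prop :=
  fun x => exists n (c : 'I_n -> R[i]) (v : 'I_n -> H),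
    (forall i, X (v i)) /\ x = \sum_(i < n) c i *: v i.
Definition cspan (X : H -> Prop) : H -> Prop := closure (span X).

Definition linear_op (T : H -> H) :=
  forall (a : R[i]) x y, T (a *: x + y) = a *: T x + T y.
Definition bounded_op (T : H -> H) :=
  exists M : R, forall x, nrm (T x) <= M * nrm x.

Definition ker (T : H -> H) : H -> Prop := fun x => T x = 0.
Definition range (T : H -> H) : H -> Prop := fun y => exists x, T x = y.

Definition partial_isometry (T : H -> H) :=
  [/\ linear_op T, bounded_op T &
      forall x, perp (ker T) x -> nrm (T x) = nrm x].

Definition unitary (T : H -> H) :=
  [/\ linear_op T, (forall x, nrm (T x) = nrm x) & (forall y, exists x, T x = y)].

Definition reducing (T : H -> H) (M : H -> Prop) :=
  [/\ closed_subspace M, (forall x, M x -> M (T x)) &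
      (forall x, perp M x -> perp M (T x))].

Definition unitary_on (T : H -> H) (M : H -> Prop) :=
  (forall x, M x -> nrm (T x) = nrm x) /\ (forall y, M y -> exists x, M x /\ T x = y).

Definition cnu (T : H -> H) :=
  forall M, reducing T M -> unitary_on T M -> forall x, M x -> x = 0.

(* A : M -> N is unitary (M, N subspaces of H; A given as a map on H) *)
Definition unitary_between (A : H -> H) (M N : H -> Prop) :=
  [/\ (forall x, M x -> N (A x)),
      (forall (a : R[i]) x y, M x -> M y -> A (a *: x + y) = a *: A x + A y),
      (forall x, M x -> nrm (A x) = nrm x) &
      (forall y, N y -> exists x, M x /\ A x = y)].

Definition onb (I : Type) (e : I -> H) (M : H -> Prop) :=
  [/\ (forall i, M (e i)), (forall i, ip (e i) (e i) = 1),
      (forall i j, i <> j -> ip (e i) (e j) = 0) &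
      (forall x, M x <-> cspan (fun y => exists i, y = e i) x)].

Definition hdim_eq (M N : H -> Prop) :=
  exists (I : Type) (e f : I -> H), onb e M /\ onb f N.

Definition hdim1 (M : H -> Prop) :=
  exists v, [/\ M v, v <> 0 & forall x, M x -> exists c : R[i], x = c *: v].

Definition is_UA (S A U : H -> H) :=
  [/\ linear_op U, (forall h, perp (ker S) h -> U h = S h) &
      (forall h, ker S h -> U h = A h)].

(* { U^n k : k in K, n in Z }, negative powers described via U^m x = k *)
Definition orbitZ (U : H -> H) (K : H -> Prop) : H -> Prop :=
  fun x => exists k, K k /\ exists n : nat, x = iter n U k \/ iter n U x = k.

End Hilbert.

(* U_A agrees with the isometry S on (ker S)^perp and maps ker S isometrically onto
   (range S)^perp; as range S is closed, U_A is an isometry onto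
   range S + (range S)^perp = H.  Let N be the orthogonal complement of the orbit
   {U_A^n k : k in K, n in Z}.  Since U_A is unitary and the orbit is invariant under U_A
   and U_A^-1, so is N; since ker S = U_A^-1 K lies in the orbit, N is orthogonal to
   ker S, where U_A = S.  Hence N reduces S and S is unitary on N, so N = 0 by complete
   nonunitarity, i.e. the orbit is total.  When K and ker S are lines, the given U is an
   instance of U_A with A = U on ker S, and every vector of K is a multiple of k. *)

From Pilot Require Import Defs.
From HB Require Import structures.
From mathcomp Require Import all_boot all_order all_algebra.
From mathcomp Require Import reals complex.
From mathcomp Require Import ring lra.
Set Implicit Arguments. Unset Strict Implicit. Unset Printing Implicit Defensive.
Import Order.TTheory GRing.Theory Num.Theory.
Local Open Scope ring_scope.
Local Notation "x %:C" := (real_complex _ x) (format "x %:C").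
Local Notation "x ^*" := (Num.conj x).
Local Notation Re := complex.Re.
Local Notation Im := complex.Im.

Section ComplexParts.
Variable R : realType.
Implicit Types z w : R[i].

Lemma ReM z w : Re (z * w) = Re z * Re w - Im z * Im w.
Proof. by case: z => a b; case: w => c d /=. Qed.
Lemma ImM z w : Im (z * w) = Re z * Im w + Im z * Re w.
Proof. by case: z => a b; case: w => c d /=. Qed.
Lemma ReD z w : Re (z + w) = Re z + Re w.
Proof. by case: z => a b; case: w => c d /=. Qed.
Lemma ReN z : Re (- z) = - Re z.
Proof. by case: z. Qed.
Lemma ReJ z : Re z^* = Re z.
Proof. by case: z. Qed.
Lemma ImJ z : Im z^* = - Im z.
Proof. by case: z. Qed.

Lemma complex_eqP z w : Re z = Re w -> Im z = Im w -> z = w.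
Proof. by case: z => a b; case: w => c d /= -> ->. Qed.

Lemma sqr_Re_Im_le0 z : Re z ^+ 2 + Im z ^+ 2 <= 0 -> z = 0.
Proof.
move=> h; have := sqr_ge0 (Re z); have := sqr_ge0 (Im z) => h1 h2.
by apply: complex_eqP => /=; apply/eqP; rewrite -sqrf_eq0; apply/eqP; lra.
Qed.

Lemma sqr_Re_ImM z w :
  Re (z * w) ^+ 2 + Im (z * w) ^+ 2 = (Re z ^+ 2 + Im z ^+ 2) * (Re w ^+ 2 + Im w ^+ 2).
Proof. by rewrite ReM ImM; ring. Qed.

Lemma sqr_Re_Im_norm1 z : `|z| = 1 -> Re z ^+ 2 + Im z ^+ 2 = 1.
Proof.
rewrite normc_def => -[] h.
by rewrite -[LHS]sqr_sqrtr ?addr_ge0 ?sqr_ge0 // h expr1n.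
Qed.

End ComplexParts.

Section Epsilon.
Variable R : realType.

Definition eps (n : nat) : R := n.+1%:R^-1.

Lemma eps_gt0 n : 0 < eps n.
Proof. by rewrite invr_gt0 ltr0n. Qed.
Lemma eps_le1 n : eps n <= 1.
Proof. by rewrite invf_le1 ?ltr0n // ler1n. Qed.
Lemma eps_lt e : 0 < e -> exists N, forall n, (N <= n)%N -> eps n < e.
Proof.
move=> he; exists (Num.Def.archi_bound e^-1) => n hn.
have he' : 0 <= e^-1 by rewrite invr_ge0 ltW.
rewrite -(ler_nat R) in hn.
rewrite /eps -[X in _ < X]invrK ltf_pV2 ?posrE ?invr_gt0 ?ltr0n //.
have := archi_boundP he'; have : n%:R < n.+1%:R :> R by rewrite ltr_nat.
lra.
Qed.

End Epsilon.
Arguments eps {R} n.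
Arguments eps_gt0 {R} n.
Arguments eps_le1 {R} n.

Section Linear.
Variables (R : realType) (H : lmodType R[i]) (T : H -> H).
Hypothesis hT : linear_op T.

Lemma linD u v : T (u + v) = T u + T v.
Proof. by have := hT 1 u v; rewrite !scale1r. Qed.
Lemma lin0 : T 0 = 0.
Proof. by apply: (addrI (T 0)); rewrite -linD !addr0. Qed.
Lemma linZ a u : T (a *: u) = a *: T u.
Proof. by rewrite -[_ *: u]addr0 hT lin0 addr0. Qed.
Lemma linB u v : T (u - v) = T u - T v.
Proof. by rewrite linD -scaleN1r linZ scaleN1r. Qed.
Lemma iter_linZ n a u : iter n T (a *: u) = a *: iter n T u.
Proof. by elim: n => //= n ->; rewrite linZ. Qed.

End Linear.

Section Orbit.
Variables (R : realType) (H : lmodType R[i]) (U : H -> H) (K : H -> Prop).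

Lemma orbitZ_base k : K k -> orbitZ U K k.
Proof. by move=> hk; exists k; split => //; exists 0%N; left. Qed.

Lemma orbitZ_U x : orbitZ U K x -> orbitZ U K (U x).
Proof.
move=> [k [hk [n [->|hn]]]]; exists k; split => //; first by exists n.+1; left.
by case: n hn => [|n] hn; [exists 1%N; left; rewrite -hn | exists n; right; rewrite -iterSr].
Qed.

Lemma orbitZ_Upre y : injective U -> orbitZ U K (U y) -> orbitZ U K y.
Proof.
move=> Uinj [k [hk [n [hn|hn]]]]; exists k; split => //; last by exists n.+1; right; rewrite iterSr.
by case: n hn => [|n] /= hn; [exists 1%N; right | exists n; left; apply: Uinj].
Qed.

End Orbit.

Section Hilbert.
Variables (R : realType) (H : lmodType R[i]) (ip : H -> H -> R[i]).
Hypothesis hip : is_inner_product ip.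
Local Notation nrm := (nrm ip).
Local Notation nrm2 x := (Re (ip x x)).

Lemma ipDl x y z : ip (x + y) z = ip x z + ip y z.
Proof. by case: hip => h _ _ _; rewrite -[x in LHS]scale1r h mul1r. Qed.
Lemma ip0l x : ip 0 x = 0.
Proof. by apply: (addrI (ip 0 x)); rewrite -ipDl !addr0. Qed.
Lemma ipZl a x z : ip (a *: x) z = a * ip x z.
Proof. by case: hip => h _ _ _; rewrite -[_ *: x]addr0 h ip0l addr0. Qed.
Lemma ipC x y : ip y x = (ip x y)^*.
Proof. by case: hip. Qed.
Lemma ipBl x y z : ip (x - y) z = ip x z - ip y z.
Proof. by rewrite ipDl -scaleN1r ipZl mulN1r. Qed.
Lemma ip0r x : ip x 0 = 0.
Proof. by rewrite ipC ip0l rmorph0. Qed.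
Lemma ipDr x y z : ip z (x + y) = ip z x + ip z y.
Proof. by rewrite !(ipC _ z) ipDl rmorphD. Qed.
Lemma ipZr a x z : ip z (a *: x) = a^* * ip z x.
Proof. by rewrite !(ipC _ z) ipZl rmorphM. Qed.
Lemma ipBr x y z : ip z (x - y) = ip z x - ip z y.
Proof. by rewrite !(ipC _ z) ipBl rmorphB. Qed.

Lemma ipxx x : ip x x = (nrm2 x)%:C.
Proof.
by case: hip => _ _ /(_ x) + _; case: (ip x x) => a b; rewrite lecE /= => /andP[/eqP ->].
Qed.
Lemma nrm2_ge0 x : 0 <= nrm2 x.
Proof. by case: hip => _ _ /(_ x) + _; rewrite lecE => /andP[]. Qed.
Lemma nrm2_eq0 x : nrm2 x = 0 -> x = 0.
Proof. by case: hip => _ _ _ h0 h; apply: h0; rewrite ipxx h. Qed.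

Lemma Re_ipC x y : Re (ip y x) = Re (ip x y).
Proof. by rewrite ipC ReJ. Qed.

Lemma nrm2D x y : nrm2 (x + y) = nrm2 x + nrm2 y + 2 * Re (ip x y).
Proof. by have := Re_ipC x y; rewrite ipDl !ipDr !ReD; lra. Qed.
Lemma nrm2B x y : nrm2 (x - y) = nrm2 x + nrm2 y - 2 * Re (ip x y).
Proof. by have := Re_ipC x y; rewrite ipBl !ipBr !ReD !ReN; lra. Qed.
Lemma Re_ipZr a x y : Re (ip x (a *: y)) = Re a * Re (ip x y) + Im a * Im (ip x y).
Proof. by rewrite ipZr ReM ReJ ImJ; ring. Qed.
Lemma nrm2Z a x : nrm2 (a *: x) = (Re a ^+ 2 + Im a ^+ 2) * nrm2 x.
Proof. by rewrite ipZl ipZr ipxx ReM ImM /=; case: a => a b /=; ring. Qed.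
Lemma nrm2_orth x y : ip x y = 0 -> nrm2 (x + y) = nrm2 x + nrm2 y.
Proof. by move=> h; rewrite nrm2D h /=; ring. Qed.
Lemma parallelogram x y : nrm2 (x - y) + nrm2 (x + y) = 2 * nrm2 x + 2 * nrm2 y.
Proof. by rewrite nrm2B nrm2D; ring. Qed.

Lemma nrm_ge0 x : 0 <= nrm x.
Proof. exact: sqrtr_ge0. Qed.
Lemma sqr_nrm x : nrm x ^+ 2 = nrm2 x.
Proof. by rewrite /Defs.nrm sqr_sqrtr // nrm2_ge0. Qed.
Lemma nrm_eq0 x : nrm x = 0 -> x = 0.
Proof. by move=> h; apply: nrm2_eq0; rewrite -sqr_nrm h expr0n. Qed.
Lemma nrm0 : nrm 0 = 0.
Proof. by rewrite /Defs.nrm ip0l sqrtr0. Qed.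
Lemma nrm_ltE v e : 0 < e -> (nrm v < e) = (nrm2 v < e ^+ 2).
Proof. by move=> he; rewrite -sqr_nrm ltr_sqr ?nnegrE ?nrm_ge0 ?ltW. Qed.
Lemma nrmZ a x : nrm (a *: x) = Num.sqrt (Re a ^+ 2 + Im a ^+ 2) * nrm x.
Proof. by rewrite /Defs.nrm nrm2Z sqrtrM // addr_ge0 // sqr_ge0. Qed.
Lemma nrmN x : nrm (- x) = nrm x.
Proof. by rewrite -scaleN1r nrmZ /= oppr0 expr0n /= sqrrN expr1n addr0 sqrtr1 mul1r. Qed.
Lemma nrmBC x y : nrm (x - y) = nrm (y - x).
Proof. by rewrite -nrmN opprB. Qed.

Lemma Re_ip_le_nrm x y : Re (ip x y) <= nrm x * nrm y.
Proof.
set b := Re (ip x y).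
have hx := nrm2_ge0 x; have hy := nrm2_ge0 y.
suff hb : b ^+ 2 <= nrm2 x * nrm2 y.
  have := mulr_ge0 (nrm_ge0 x) (nrm_ge0 y).
  have : b ^+ 2 <= (nrm x * nrm y) ^+ 2 by rewrite exprMn !sqr_nrm.
  nra.
have [y0|hy0] := eqVneq (nrm2 y) 0.
  have -> : b = 0 by rewrite /b (nrm2_eq0 y0) ip0r.
  by rewrite expr0n mulr_ge0.
have hyp : 0 < nrm2 y by rewrite lt0r hy0.
(* expand 0 <= nrm2 (x + t y) at the optimal t = - b / nrm2 y *)
have := nrm2_ge0 (x + (- b / nrm2 y)%:C *: y).
rewrite nrm2D nrm2Z Re_ipZr /= expr0n /= !addr0 mul0r addr0 -/b.
have -> : nrm2 x + (- b / nrm2 y) ^+ 2 * nrm2 y + 2 * (- b / nrm2 y * b) =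
          (nrm2 x * nrm2 y - b ^+ 2) / nrm2 y by field; exact: hy0.
by rewrite pmulr_lge0 ?invr_gt0 // subr_ge0.
Qed.

Lemma nrmD x y : nrm (x + y) <= nrm x + nrm y.
Proof.
rewrite -(ler_sqr (x := nrm (x + y))) ?nnegrE ?addr_ge0 ?nrm_ge0 //.
by rewrite sqr_nrm nrm2D sqrrD !sqr_nrm; have := Re_ip_le_nrm x y; lra.
Qed.
Lemma nrm_tri a b c : nrm (a - c) <= nrm (a - b) + nrm (b - c).
Proof. by rewrite -[a - c](subrKA b); exact: nrmD. Qed.

Definition cauchy_seq (u : nat -> H) := forall e : R, 0 < e ->
  exists N, forall m n, (N <= m)%N -> (N <= n)%N -> nrm (u m - u n) < e.
Definition converges_to (u : nat -> H) (l : H) := forall e : R, 0 < e ->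
  exists N, forall n, (N <= n)%N -> nrm (u n - l) < e.

Lemma perp_self_eq0 (Z : H -> Prop) x : Z x -> perp ip Z x -> x = 0.
Proof. by move=> hz hp; case: hip => _ _ _; apply; exact: hp. Qed.

Lemma perp_closed_subspace M : closed_subspace ip (perp ip M).
Proof.
split.
- by move=> y _; exact: ip0l.
- by move=> x y hx hy z hz; rewrite ipDl hx // hy // addr0.
- by move=> a x hx z hz; rewrite ipZl hx // mulr0.
move=> x hx y hy; apply: sqr_Re_Im_le0.
set c := ip x y; set r := Re c ^+ 2 + Im c ^+ 2.
rewrite leNgt; apply/negP => hr.
have hB := nrm_ge0 (c *: y).
have he : 0 < r / (nrm (c *: y) + 1) by rewrite divr_gt0 // ltr_wpDl.
have [z [hz hxz]] := hx _ he.
(* z is orthogonal to y, so Re <x - z, c y> = r, while Cauchy-Schwarz makes it small *)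
have hcs := Re_ip_le_nrm (x - z) (c *: y).
rewrite Re_ipZr ipBl (hz _ hy) subr0 -/c in hcs.
have ht : r / (nrm (c *: y) + 1) * (nrm (c *: y) + 1) = r by rewrite divfK // gt_eqF // ltr_wpDl.
have := nrm_ge0 (x - z); move: hxz hcs ht he.
set t := r / _; set n := nrm (x - z); set B := nrm _ => h1 h2 h3 h4 h5.
have : n * B <= t * B by rewrite ler_wpM2r // ltW.
rewrite /r in h3 *; nra.
Qed.

Lemma closed_subspaceB (C : H -> Prop) u v :
  closed_subspace ip C -> C u -> C v -> C (u - v).
Proof. by case=> _ CD CZ _ hu hv; apply: CD hu _; rewrite -scaleN1r; exact: CZ. Qed.

Lemma span_sub (X : H -> Prop) x : X x -> Defs.span X x.
Proof.
by move=> hx; exists 1%N, (fun _ => 1), (fun _ => x); rewrite big_ord1 scale1r.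
Qed.
Lemma span0 (X : H -> Prop) : Defs.span X 0.
Proof. by exists 0%N, (fun _ => 0), (fun _ => 0); rewrite big_ord0; split => //; case. Qed.
Lemma spanD (X : H -> Prop) x y : Defs.span X x -> Defs.span X y -> Defs.span X (x + y).
Proof.
move=> [n [c [v [hv ->]]]] [m [c' [v' [hv' ->]]]].
exists (n + m)%N, (fun i => match split i with inl j => c j | inr j => c' j end),
  (fun i => match split i with inl j => v j | inr j => v' j end); split.
  by move=> i; case: (split i).
rewrite big_split_ord /=; congr (_ + _); apply: eq_bigr => i _.
  by rewrite -[lshift m i]/(unsplit (inl i)) unsplitK.
by rewrite -[rshift n i]/(unsplit (inr i)) unsplitK.
Qed.
Lemma spanZ (X : H -> Prop) a x : Defs.span X x -> Defs.span X (a *: x).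
Proof.
move=> [n [c [v [hv ->]]]]; exists n, (fun i => a * c i), v; split => //.
by rewrite scaler_sumr; apply: eq_bigr => i _; rewrite scalerA.
Qed.

Lemma closure_sub (M : H -> Prop) x : M x -> Defs.closure ip M x.
Proof. by move=> hx e he; exists x; rewrite subrr nrm0. Qed.
Lemma closure_idem (M : H -> Prop) x : Defs.closure ip (Defs.closure ip M) x -> Defs.closure ip M x.
Proof.
move=> h e he; have he2 : 0 < e / 2 by rewrite divr_gt0.
have [y [hy hxy]] := h _ he2; have [z [hz hyz]] := hy _ he2.
by exists z; split => //; apply: le_lt_trans (nrm_tri x y z) _; rewrite [e]splitr ltrD.
Qed.
Lemma closure_limit (M : H -> Prop) u l :
  (forall n, M (u n)) -> converges_to u l -> Defs.closure ip M l.
Proof.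
by move=> hu hl e /hl[N hN]; exists (u N); rewrite nrmBC hN.
Qed.

Lemma cspan_closed (X : H -> Prop) : closed_subspace ip (cspan ip X).
Proof.
split.
- exact/closure_sub/span0.
- move=> x y hx hy e he; have he2 : 0 < e / 2 by rewrite divr_gt0.
  have [x' [hx' h1]] := hx _ he2; have [y' [hy' h2]] := hy _ he2.
  exists (x' + y'); split; first exact: spanD.
  rewrite opprD addrACA; apply: le_lt_trans (nrmD _ _) _.
  by rewrite [e]splitr ltrD.
- move=> a x hx e he.
  set B := Num.sqrt (Re a ^+ 2 + Im a ^+ 2); have hB : 0 <= B := sqrtr_ge0 _.
  have he' : 0 < e / (B + 1) by rewrite divr_gt0 // ltr_wpDl.
  have [x' [hx' h1]] := hx _ he'.
  exists (a *: x'); split; first exact: spanZ.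
  have ht : e / (B + 1) * (B + 1) = e by rewrite divfK // gt_eqF // ltr_wpDl.
  rewrite -scalerBr nrmZ -/B; move: h1 ht; have := nrm_ge0 (x - x').
  set t := e / (B + 1); nra.
- by move=> x; exact: closure_idem.
Qed.

Lemma cspan_min (C X : H -> Prop) : closed_subspace ip C -> (forall x, X x -> C x) ->
  forall x, cspan ip X x -> C x.
Proof.
case=> C0 CD CZ Ccl hX x hx; apply: Ccl => e /hx[_ [[n [c [v [hv ->]]]] h]].
exists (\sum_(i < n) c i *: v i); split => //.
by apply: (big_ind C) => // i _; apply/CZ/hX.
Qed.

Lemma isometry_ip T : linear_op T -> (forall z, nrm (T z) = nrm z) ->
  forall x y, ip (T x) (T y) = ip x y.
Proof.
move=> hT hn.
have hq z : nrm2 (T z) = nrm2 z by rewrite -!sqr_nrm hn.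
have hRe u v : Re (ip (T u) (T v)) = Re (ip u v).
  by have := nrm2D (T u) (T v); have := nrm2D u v; rewrite -(linD hT) !hq; lra.
(* the imaginary part is the real part against 'i v *)
have hIm u v : Im (ip u v) = Re (ip u ('i *: v)) by rewrite Re_ipZr /=; ring.
by move=> x y; apply: complex_eqP; rewrite ?hIm -?(linZ hT) hRe.
Qed.

Lemma unitary_perp_invariant U (O : H -> Prop) : unitary ip U ->
  (forall x, O x -> O (U x)) -> (forall y, O (U y) -> O y) ->
  forall h, perp ip O (U h) <-> perp ip O h.
Proof.
move=> [hU hiso hsurj] hO hO' h; split => hh o ho.
  by rewrite -(isometry_ip hU hiso); apply/hh/hO.
by have [o' ho'] := hsurj o; rewrite -ho' (isometry_ip hU hiso); apply/hh/hO'; rewrite ho'.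
Qed.

Lemma minimizer_perp (C : H -> Prop) x m :
  (forall u v, C u -> C v -> C (u + v)) -> (forall a u, C u -> C (a *: u)) ->
  C m -> (forall m', C m' -> nrm2 (x - m) <= nrm2 (x - m')) -> perp ip C (x - m).
Proof.
move=> CD CZ hm hmin y hy; set w := x - m; set c := ip w y.
apply: sqr_Re_Im_le0; set r := Re c ^+ 2 + Im c ^+ 2.
have hr : 0 <= r by rewrite addr_ge0 ?sqr_ge0.
have hqy := nrm2_ge0 y.
set t := (nrm2 y + 1)^-1.
have ht : t * (nrm2 y + 1) = 1 by rewrite mulVf // gt_eqF // ltr_wpDl.
have ht0 : 0 < t by rewrite invr_gt0 ltr_wpDl.
(* compare with the competitor m + t c y *)
have := hmin (m + (t%:C * c) *: y) (CD _ _ hm (CZ _ _ hy)).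
rewrite opprD addrA -/w (nrm2B w) nrm2Z Re_ipZr -/c !ReM !ImM /= !mul0r subr0 addr0.
have -> : ((t * Re c) ^+ 2 + (t * Im c) ^+ 2) * nrm2 y = t ^+ 2 * r * nrm2 y by rewrite /r; ring.
have -> : t * Re c * Re c + t * Im c * Im c = t * r by rewrite /r; ring.
move=> h.
have h3 : 2 * r <= t * r * nrm2 y by rewrite -(ler_pM2l ht0); nra.
have : t * nrm2 y <= 1 by nra.
nra.
Qed.

Lemma minimizing_seq_cauchy (C : H -> Prop) x d (u : nat -> H) :
  (forall a b, C a -> C b -> C (a + b)) -> (forall a v, C v -> C (a *: v)) ->
  (forall m, C m -> d <= nrm2 (x - m)) ->
  (forall n, C (u n) /\ nrm2 (x - u n) < d + eps n) -> cauchy_seq u.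
Proof.
move=> CD CZ hd hu e he; have he4 : 0 < e ^+ 2 / 4 by rewrite divr_gt0 // exprn_gt0.
have [N hN] := eps_lt he4; exists N => m n hm hn; rewrite nrm_ltE //.
have [hcm hqm] := hu m; have [hcn hqn] := hu n.
(* the parallelogram law at the midpoint, which lies in C *)
set mid := (2^-1 : R[i]) *: (u m + u n).
have e1 : u m - u n = (x - u n) - (x - u m) by rewrite opprB [RHS]addrC addrA subrK.
have half z : (2^-1 : R[i]) *: z + 2^-1 *: z = z.
  by rewrite -scalerDl -[2^-1]mul1r -splitr scale1r.
have e2 : (x - u n) + (x - u m) = (x - mid) + (x - mid).
  by rewrite addrACA [RHS]addrACA -!opprD half [u n + _]addrC.
have := parallelogram (x - u n) (x - u m); rewrite -e1 e2 (nrm2D (x - mid)).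
have := hd _ (CZ (2^-1) _ (CD _ _ hcm hcn)); rewrite -/mid.
have := hN _ hm; have := hN _ hn.
have : 0 < eps m :> R := eps_gt0 m; have : 0 < eps n :> R := eps_gt0 n.
lra.
Qed.

Lemma limit_nrm2_le x d (u : nat -> H) l : 0 <= d ->
  (forall n, nrm2 (x - u n) < d + eps n) -> converges_to u l -> nrm2 (x - l) <= d.
Proof.
move=> hd0 hu hl; apply/ler_addgt0Pr => e he.
(* with x - l = (x - u n) + (u n - l), nrm (x - u n) <= d + 2 and nrm (u n - l) <= 1,
   the excess over nrm2 (x - u n) is at most (2 d + 5) nrm (u n - l) *)
set dl := e / (3 * (2 * d + 5)).
have hd5 : 0 < 3 * (2 * d + 5) by rewrite mulr_gt0 // ltr_wpDl // mulr_ge0.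
have hdl : 0 < dl by rewrite divr_gt0.
have hdl' : dl * (3 * (2 * d + 5)) = e by rewrite divfK // gt_eqF.
have [N1 hN1] : exists N, forall n, (N <= n)%N -> nrm (u n - l) < Num.min dl 1.
  by apply: hl; rewrite lt_min hdl ltr01.
have [N2 hN2] := eps_lt (divr_gt0 he (ltr0Sn _ 2)).
set n := maxn N1 N2.
have /andP[hc1 hc1'] : (nrm (u n - l) < dl) && (nrm (u n - l) < 1).
  by rewrite -lt_min hN1 // leq_maxl.
have hc2 := hN2 n (leq_maxr _ _).
have hcs := Re_ip_le_nrm (x - u n) (u n - l).
rewrite -[x - l](subrKA (u n)) nrm2D.
have := hu n; rewrite -(sqr_nrm (x - u n)) -(sqr_nrm (u n - l)).
move: hc1 hc1' hcs hc2.
have := nrm_ge0 (x - u n); have := nrm_ge0 (u n - l); have : eps n <= 1 :> R := eps_le1 n.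
set na := nrm (x - u n); set nc := nrm (u n - l); set rr := Re _.
move=> h1 h2 h3 h4 h5 h6 h7 h8.
have hna : na <= d + 2.
  rewrite leNgt; apply/negP => h.
  have : (d + 2) ^+ 2 < na ^+ 2 by rewrite ltr_sqr ?nnegrE ?addr_ge0.
  have := sqr_ge0 d; rewrite sqrrD; move: h8 h1; lra.
have : nc ^+ 2 <= nc by nra.
have : 2 * na * nc <= 2 * (d + 2) * nc by nra.
have : (2 * d + 5) * nc <= (2 * d + 5) * dl by rewrite ler_pM2l ?ltW // ltr_wpDl // mulr_ge0.
nra.
Qed.

Section Complete.
Hypothesis hc : complete_ip ip.

Lemma exists_minimizer (C : H -> Prop) x : closed_subspace ip C ->
  exists m, C m /\ forall m', C m' -> nrm2 (x - m) <= nrm2 (x - m').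
Proof.
case=> C0 CD CZ Ccl.
pose E r := exists m, C m /\ r = nrm2 (x - m).
have hne : classical_sets.nonempty E by exists (nrm2 (x - 0)), 0.
have hlb0 : classical_sets.lbound E 0 by move=> r [m [_ ->]]; exact: nrm2_ge0.
have hlb : classical_sets.has_lbound E by exists 0.
have hd m : C m -> inf E <= nrm2 (x - m) by move=> hm; apply: (ge_inf hlb); exists m.
have happ n : exists m, C m /\ nrm2 (x - m) < inf E + eps n.
  have /(inf_lt hne)[r [m [hm ->]] hr] : inf E < inf E + eps n by rewrite ltrDl eps_gt0.
  by exists m.
have [u hu] := boolp.choice happ.
have [l hl] := hc (minimizing_seq_cauchy CD CZ hd hu).
exists l; split; first exact/Ccl/(closure_limit (fun n => proj1 (hu n)) hl).
move=> m' /hd; apply: le_trans.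
exact: limit_nrm2_le (lb_le_inf hne hlb0) (fun n => proj2 (hu n)) hl.
Qed.

Lemma orthogonal_decomposition (C : H -> Prop) x : closed_subspace ip C ->
  exists m, C m /\ perp ip C (x - m).
Proof.
move=> hC; have [m [hm hmin]] := exists_minimizer x hC.
by exists m; split => //; case: hC => _ CD CZ _; exact: minimizer_perp.
Qed.

Lemma cspan_full_of_perp0 (X : H -> Prop) :
  (forall x, perp ip X x -> x = 0) -> forall x, cspan ip X x.
Proof.
move=> h x; have [m [hm hp]] := orthogonal_decomposition x (cspan_closed X).
suff /eqP : x - m = 0 by rewrite subr_eq0 => /eqP ->.
by apply: h => y hy; apply: hp; exact/closure_sub/span_sub.
Qed.

Lemma isometric_image_closed T (D : H -> Prop) :
  linear_op T -> closed_subspace ip D -> (forall x, D x -> nrm (T x) = nrm x) ->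
  forall y, Defs.closure ip (fun y => exists2 x, D x & T x = y) y -> exists2 x, D x & T x = y.
Proof.
move=> hT hD hiso y hy.
have happ n : exists p, D p /\ nrm (y - T p) < eps n.
  by have [_ [[p hp <-] h]] := hy _ (eps_gt0 n); exists p.
have [p hp] := boolp.choice happ.
have hcau : cauchy_seq p.
  move=> e he; have [N hN] := eps_lt (divr_gt0 he (ltr0Sn _ 1)).
  exists N => m n hm hn; have [hpm hym] := hp m; have [hpn hyn] := hp n.
  rewrite -(hiso (p m - p n)); last exact: closed_subspaceB hD hpm hpn.
  rewrite (linB hT).
  apply: le_lt_trans (nrm_tri _ y _) _; rewrite nrmBC [e]splitr ltrD //.
    exact: lt_trans hym (hN _ hm).
  exact: lt_trans hyn (hN _ hn).
have [l hl] := hc hcau.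
have hDl : D l by case: hD => _ _ _; apply; exact: closure_limit (fun n => proj1 (hp n)) hl.
exists l => //; apply/eqP; rewrite -subr_eq0; apply/eqP/nrm_eq0/le_anti.
rewrite nrm_ge0 andbT; apply/ler_addgt0Pr => e he; rewrite add0r.
have he2 : 0 < e / 2 by rewrite divr_gt0.
have [N1 hN1] := hl _ he2; have [N2 hN2] := eps_lt he2.
set n := maxn N1 N2.
apply: le_trans (nrm_tri _ (T (p n)) _) _; rewrite [e]splitr lerD //.
  rewrite -(linB hT) hiso; last exact: closed_subspaceB hD hDl (proj1 (hp n)).
  by rewrite nrmBC ltW // hN1 // leq_maxl.
by rewrite nrmBC ltW // (lt_trans (proj2 (hp n))) // hN2 // leq_maxr.
Qed.

Section PartialIsometry.
Variable S : H -> H.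
Hypothesis hS : partial_isometry ip S.

Let S_lin : linear_op S. Proof. by case: hS. Qed.
Let S_iso x : perp ip (ker S) x -> nrm (S x) = nrm x.
Proof. by case: hS => _ _; apply. Qed.

Lemma ker_closed : closed_subspace ip (ker S).
Proof.
split.
- exact: lin0.
- by move=> x y hx hy; rewrite /ker (linD S_lin) hx hy addr0.
- by move=> a x hx; rewrite /ker (linZ S_lin) hx scaler0.
move=> x hx; apply/nrm_eq0/le_anti; rewrite nrm_ge0 andbT.
case: hS => _ [M hM] _; apply/ler_addgt0Pr => e he; rewrite add0r.
have hM1 : 0 < `|M| + 1 by rewrite ltr_wpDl.
have [y [hy hxy]] := hx _ (divr_gt0 he hM1).
have -> : S x = S (x - y) by rewrite (linB S_lin) hy subr0.
apply: le_trans (hM _) _.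
have ht : e / (`|M| + 1) * (`|M| + 1) = e by rewrite divfK // gt_eqF.
have := nrm_ge0 (x - y); have := ler_norm M; move: hxy ht.
set t := e / _; set n := nrm _; nra.
Qed.

Lemma decomp_ker h : exists h2, ker S h2 /\ perp ip (ker S) (h - h2).
Proof. exact: orthogonal_decomposition h ker_closed. Qed.

Lemma range_closed : closed_subspace ip (range S).
Proof.
split.
- by exists 0; rewrite (lin0 S_lin).
- by move=> _ _ [x <-] [y <-]; exists (x + y); rewrite (linD S_lin).
- by move=> a _ [x <-]; exists (a *: x); rewrite (linZ S_lin).
move=> y hy.
suff [x _ hx] : exists2 x, perp ip (ker S) x & S x = y by exists x.
apply: (isometric_image_closed S_lin (perp_closed_subspace _) S_iso).
move=> e /hy[_ [[x <-] h]]; have [x2 [hx2 hp]] := decomp_ker x.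
by exists (S x); split => //; exists (x - x2) => //; rewrite (linB S_lin) hx2 subr0.
Qed.

Variable A : H -> H.
Hypothesis hA : unitary_between ip A (ker S) (perp ip (range S)).

Lemma is_UA_decomp U h h2 : is_UA ip S A U ->
  ker S h2 -> perp ip (ker S) (h - h2) -> U h = S h + A h2.
Proof.
case=> hU hUS hUA hk hp.
by rewrite -[h](subrK h2) (linD hU) hUS // hUA // !(linB S_lin) hk subrK subr0.
Qed.

Lemma UA_unitary U : is_UA ip S A U -> unitary ip U.
Proof.
move=> hUA; have hU : linear_op U by case: hUA.
case: hA => hAK _ hAiso hAsurj.
split => //.
- move=> x; have [x2 [hx2 hp]] := decomp_ker x.
  have hSx : S x = S (x - x2) by rewrite (linB S_lin) hx2 subr0.
  rewrite (is_UA_decomp hUA hx2 hp) /Defs.nrm hSx.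
  (* both splittings are orthogonal: x - x2 ⊥ ker S and S (x - x2) ⊥ A x2 *)
  rewrite nrm2_orth; last by rewrite ipC (hAK _ hx2) ?rmorph0 //; exists (x - x2).
  rewrite -[in RHS](subrK x2 x) nrm2_orth; last exact: hp.
  by rewrite -!sqr_nrm S_iso // hAiso.
- move=> y; have [m [[x hx] hym]] := orthogonal_decomposition y range_closed.
  have [x2 [hx2 hp]] := decomp_ker x; have [z [hz hzA]] := hAsurj _ hym.
  exists ((x - x2) + z).
  rewrite (is_UA_decomp hUA hz); last by rewrite addrK.
  by rewrite (linD S_lin) hz addr0 hzA (linB S_lin) hx2 subr0 hx addrC subrK.
Qed.

Lemma UA_exists : exists U, is_UA ip S A U.
Proof.
have hP := perp_closed_subspace (ker S).
have [pK hpK] := boolp.choice decomp_ker.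
have pK_unique h z : ker S z -> perp ip (ker S) (h - z) -> pK h = z.
  move=> hz hp; have [hk hp'] := hpK h; apply/eqP; rewrite -subr_eq0; apply/eqP.
  apply: (perp_self_eq0 (closed_subspaceB ker_closed hk hz)).
  have -> : pK h - z = (h - z) - (h - pK h) by rewrite [in RHS]opprB [in RHS]addrC addrA subrK.
  exact: closed_subspaceB hP hp hp'.
have pK_lin a x y : pK (a *: x + y) = a *: pK x + pK y.
  have [hkx hpx] := hpK x; have [hky hpy] := hpK y.
  case: ker_closed => _ KD KZ _; case: hP => _ PD PZ _.
  apply: pK_unique; first exact/KD/hky/KZ.
  by rewrite opprD addrACA -scalerBr; apply/PD/hpy/PZ.
exists (fun h => S h + A (pK h)); split.
- move=> a x y; case: hA => _ hAlin _ _.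
  rewrite (S_lin a) pK_lin hAlin; [|exact: (proj1 (hpK x))|exact: (proj1 (hpK y))].
  by rewrite scalerDr addrACA.
- move=> h hh; have K0 : ker S 0 := lin0 S_lin.
  have A0 : A 0 = 0.
    case: hA => _ hAlin _ _; have := hAlin 1 0 0 K0 K0; rewrite !scale1r addr0 => h0.
    by apply: (addrI (A 0)); rewrite addr0 -h0.
  by rewrite (pK_unique h 0) ?subr0 // A0 addr0.
- move=> h hh; rewrite (pK_unique h h) ?subrr ?hh ?add0r //; case: hP => //.
Qed.

Hypothesis hcnu : cnu ip S.

Lemma UA_orbit_dense U : is_UA ip S A U ->
  forall x, cspan ip (orbitZ U (perp ip (range S))) x.
Proof.
move=> hUA; have [hU hUS hUA'] := hUA; have hUu := UA_unitary hUA.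
have [_ hiso hsurj] := hUu.
set O := orbitZ U (perp ip (range S)); set N := perp ip O.
have Uinj : injective U.
  move=> x y hxy; apply/eqP; rewrite -subr_eq0; apply/eqP/nrm_eq0.
  by rewrite -hiso (linB hU) hxy subrr nrm0.
have O_ker z : ker S z -> O z.
  move=> hz; apply: orbitZ_Upre Uinj _; apply: orbitZ_base.
  by rewrite hUA' //; case: hA => + _ _ _; apply.
have N_U h : N (U h) <-> N h.
  by apply: unitary_perp_invariant => // y; [exact: orbitZ_U | exact: orbitZ_Upre].
have N_perp_ker h : N h -> perp ip (ker S) h by move=> hh y /O_ker; exact: hh.
suff N0 : forall x, N x -> x = 0 by exact: cspan_full_of_perp0.
apply: hcnu; split.
- exact: perp_closed_subspace.
- by move=> x hx; rewrite -hUS ?N_U //; exact: N_perp_ker.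
- move=> x hx y hy; have [y' hy'] := hsurj y.
  have hNy' : N y' by apply/N_U; rewrite hy'.
  have [x2 [hx2 hp]] := decomp_ker x.
  have -> : S x = U (x - x2) by rewrite hUS // (linB S_lin) hx2 subr0.
  rewrite -hy' (isometry_ip hU hiso) ipBl (hx _ hNy') ipC (hNy' _ (O_ker _ hx2)).
  by rewrite rmorph0 subrr.
- by move=> x hx; exact/S_iso/N_perp_ker.
- move=> y hy; have [x hx] := hsurj y.
  have hNx : N x by apply/N_U; rewrite hx.
  by exists x; split => //; rewrite -hx hUS //; exact: N_perp_ker.
Qed.
End PartialIsometry.

End Complete.

Lemma hdim1_multiple (M : H -> Prop) z : hdim1 M -> M z -> z <> 0 ->
  forall x, M x -> exists c : R[i], x = c *: z.
Proof.
move=> [v [_ _ hv]] hz z0 x /hv[c ->]; have [d hd] := hv _ hz.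
have d0 : d != 0 by apply: contra_notN z0 => /eqP d0; rewrite hd d0 scale0r.
by exists (c / d); rewrite hd scalerA divfK.
Qed.

Lemma unitary_between_line (M N : H -> Prop) U kt k (alpha : R[i]) :
  (forall x, M x <-> exists c : R[i], x = c *: kt) ->
  (forall y, N y <-> exists c : R[i], y = c *: k) ->
  nrm kt = 1 -> nrm k = 1 -> `|alpha| = 1 -> linear_op U ->
  (forall c, U (c *: kt) = (c * alpha) *: k) -> unitary_between ip U M N.
Proof.
move=> hM hN hkt hk hal hU hUk.
have alpha0 : alpha != 0.
  by apply: contra_eq_neq hal => ->; rewrite normr0 eq_sym oner_neq0.
split.
- by move=> x /hM[c ->]; rewrite hUk; apply/hN; exists (c * alpha).
- by move=> a x y _ _; exact: hU.
- by move=> x /hM[c ->]; rewrite hUk !nrmZ hk hkt sqr_Re_ImM (sqr_Re_Im_norm1 hal) mulr1.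
- move=> y /hN[c ->]; exists ((c / alpha) *: kt); split; first by apply/hM; exists (c / alpha).
  by rewrite hUk divfK.
Qed.

Lemma cspan_orbitZ_line U (K : H -> Prop) k : linear_op U ->
  (forall x, nrm (U x) = nrm x) -> (forall y, K y -> exists c : R[i], y = c *: k) ->
  forall x, cspan ip (orbitZ U K) x -> cspan ip (orbitZ U (fun y => y = k)) x.
Proof.
move=> hU hiso hK; apply: cspan_min (cspan_closed _) _ => o [k0 [hk0 [n hn]]].
have [c hc] := hK _ hk0; rewrite {k0 hk0}hc in hn.
case: hn => [-> | hn].
  rewrite (iter_linZ hU); apply/closure_sub/spanZ/span_sub.
  by exists k; split => //; exists n; left.
have [c0 | c0] := eqVneq c 0.
  suff -> : o = 0 by case: (cspan_closed (orbitZ U (fun y => y = k))).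
  have iter_nrm m : nrm (iter m U o) = nrm o by elim: m => //= m <-.
  by apply: nrm_eq0; rewrite -(iter_nrm n) hn c0 scale0r nrm0.
rewrite -[o](scalerKV c0); apply/closure_sub/spanZ/span_sub.
by exists k; split => //; exists n; right; rewrite (iter_linZ hU) hn scalerK.
Qed.

End Hilbert.

Theorem mainTheorem4 (R : realType) (H : lmodType R[i]) (ip : H -> H -> R[i])
    (hH : hilbert ip) (S : H -> H)
    (hS : partial_isometry ip S) (hcnu : cnu ip S)
    (hdim : hdim_eq ip (perp ip (range S)) (ker S)) :
  (forall A : H -> H, unitary_between ip A (ker S) (perp ip (range S)) ->
     (exists U, is_UA ip S A U) /\
     (forall U, is_UA ip S A U ->
        unitary ip U /\
        (forall x, cspan ip (orbitZ U (perp ip (range S))) x))) /\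
  (hdim1 (perp ip (range S)) -> hdim1 (ker S) ->
   forall (k kt : H) (alpha : R[i]),
     perp ip (range S) k -> nrm ip k = 1 ->
     ker S kt -> nrm ip kt = 1 -> `|alpha| = 1 ->
     forall U : H -> H,
       linear_op U -> (forall h, perp ip (ker S) h -> U h = S h) ->
       (forall c : R[i], U (c *: kt) = (c * alpha) *: k) ->
       forall x, cspan ip (orbitZ U (fun y => y = k)) x).
Proof.
case: hH => hip hc; split.
  move=> A hA; split; first exact: (UA_exists hip hc hS hA).
  move=> U hU; split; first exact: (UA_unitary hip hc hS hA hU).
  exact: (UA_orbit_dense hip hc hS hA hcnu hU).
move=> hK hKt k kt alpha hk hnk hkt hnkt hal U hU hUS hUk.
have nz z : nrm ip z = 1 -> z <> 0.
  by move=> + z0; rewrite z0 (nrm0 hip) => /eqP; rewrite eq_sym oner_eq0.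
have hKk := hdim1_multiple hK hk (nz _ hnk).
have hKtkt := hdim1_multiple hKt hkt (nz _ hnkt).
(* on ker S the operator U itself plays the role of A *)
have hA : unitary_between ip U (ker S) (perp ip (range S)).
  apply: (unitary_between_line hip _ _ hnkt hnk hal hU hUk) => x.
    split; first exact: hKtkt.
    by case=> c ->; case: (ker_closed hip hS) => _ _ KZ _; exact: KZ.
  split; first exact: hKk.
  by case=> c ->; case: (perp_closed_subspace hip (range S)) => _ _ KZ _; exact: KZ.
have hUA : is_UA ip S U U by split.
have [_ hiso _] := UA_unitary hip hc hS hA hUA.
move=> x; apply: (cspan_orbitZ_line hip hU hiso hKk).
exact: (UA_orbit_dense hip hc hS hA hcnu hUA).
Qed.
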